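(* Let $A$ be an algebra of Jordan type half over a field $\mathbb{F}$ of characteristic zero. If $a,b\in A$ are primitive axes of Jordan type half with $(a,b)=1$, then every non-zero idempotent of $J=\langle\langle a,b\rangle\rangle$ is a primitive axis of Jordan type half in $A$; that is, $J$ is solid.
   Context: All algebras are commutative, not necessarily associative; $A_\lambda(x)=\{u\in A:xu=\lambda u\}$. A primitive axis of Jordan type half is $x\neq0$ with $x^2=x$, $A=A_1(x)\oplus A_0(x)\oplus A_{1/2}(x)$, $A_1(x)=\mathbb{F}x$, and fusion rules $A_1A_1\subseteq A_1$, $A_1A_0=0$, $A_0A_0\subseteq A_0$, $A_1A_{1/2},A_0A_{1/2}\subseteq A_{1/2}$, $A_{1/2}A_{1/2}\subseteq A_1\oplus A_0$. An algebra of Jordan type half is a commutative algebra generated by such axes; it has a unique Frobenius form $(\cdot,\cdot)$ (bilinear, $(uv,w)=(u,vw)$, $(x,x)=1$ for primitive axes $x$). $J=\langle\langle a,b\rangle\rangle$ is solid if every idempotent $c\in J$ with $c\neq0$ and $c\neq1_J$ (the identity of $J$, if it exists; here $J$ has none) is a primitive axis of Jordan type half in $A$. *)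

From HB Require Import structures.
From mathcomp Require Import all_boot all_order all_algebra.
Set Implicit Arguments. Unset Strict Implicit. Unset Printing Implicit Defensive.
Import GRing.Theory.
Local Open Scope ring_scope.

Section JordanHalf.
Variables (F : fieldType) (V : lmodType F) (mul : V -> V -> V).

Definition comm_bilinear_mul : Prop :=
  [/\ forall u v, mul u v = mul v u,
      forall (k : F) u v w, mul (k *: u + v) w = k *: mul u w + mul v w
    & forall (k : F) u v w, mul w (k *: u + v) = k *: mul w u + mul w v].

Definition eigsp (x : V) (lam : F) (u : V) : Prop := mul x u = lam *: u.

Definition primitive_axis_half (x : V) : Prop :=
  [/\ x != 0,
      mul x x = x,
      (* A = A_1(x) + A_0(x) + A_{1/2}(x) (the sum is automatically direct) *)
      forall u, exists u1 u0 uh,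
        [/\ u = u1 + u0 + uh, eigsp x 1 u1, eigsp x 0 u0 & eigsp x 2^-1 uh],
      (forall u, eigsp x 1 u -> exists k : F, u = k *: x) &
      [/\ forall u v, eigsp x 1 u -> eigsp x 1 v -> eigsp x 1 (mul u v),
          forall u v, eigsp x 1 u -> eigsp x 0 v -> mul u v = 0,
          forall u v, eigsp x 0 u -> eigsp x 0 v -> eigsp x 0 (mul u v),
          (forall u v, eigsp x 1 u -> eigsp x 2^-1 v -> eigsp x 2^-1 (mul u v)) /\
          (forall u v, eigsp x 0 u -> eigsp x 2^-1 v -> eigsp x 2^-1 (mul u v))
        & forall u v, eigsp x 2^-1 u -> eigsp x 2^-1 v ->
            exists w1 w0, [/\ mul u v = w1 + w0, eigsp x 1 w1 & eigsp x 0 w0]]].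

Inductive gen_subalg (S : V -> Prop) : V -> Prop :=
  | gen_base x : S x -> gen_subalg S x
  | gen_zero : gen_subalg S 0
  | gen_add u v : gen_subalg S u -> gen_subalg S v -> gen_subalg S (u + v)
  | gen_scale (k : F) u : gen_subalg S u -> gen_subalg S (k *: u)
  | gen_mul u v : gen_subalg S u -> gen_subalg S v -> gen_subalg S (mul u v).

Definition jordan_type_half_algebra : Prop :=
  comm_bilinear_mul /\ forall u, gen_subalg primitive_axis_half u.

Definition frobenius_form (form : V -> V -> F) : Prop :=
  [/\ forall (k : F) u v w, form (k *: u + v) w = k * form u w + form v w,
      forall (k : F) u v w, form w (k *: u + v) = k * form w u + form w v,
      forall u v w, form (mul u v) w = form u (mul v w)
    & forall x, primitive_axis_half x -> form x x = 1].

Definition gen2 (a b : V) : V -> Prop := gen_subalg (fun x => x = a \/ x = b).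

End JordanHalf.

From HB Require Import structures.
From mathcomp Require Import all_boot all_order all_algebra.
From mathcomp Require Import ring.
Set Implicit Arguments. Unset Strict Implicit. Unset Printing Implicit Defensive.
Import GRing.Theory.
Local Open Scope ring_scope.

(* Decompose b = a + s + h along the eigenspaces of a, with s in A_0(a) and
   h in A_1/2(a).  The fusion rules, b^2 = b and the Frobenius form force
   s^2 = s h = 0 and h^2 = s, so <<a, b>> is spanned by a, s, h and its nonzero
   idempotents are the points X(t) = a + t^2 s + t h (idem_curve t) of a
   parabola, with X(0) = a and X(1) = b.  The Miyamoto involution of X(t) maps
   X(t') to X(2t - t'), hence every X(n), n in N, is a primitive axis.  For a
   nonzero idempotent x, being a primitive axis amounts to finitely many
   identities that are polynomial in x, hence in t along the parabola; in
   characteristic 0 they hold for all t because they hold at infinitely many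
   points. *)

Section Comb3.
Variables (F : fieldType) (V : lmodType F) (u v w : V).

Definition comb3 (x y z : F) : V := x *: u + y *: v + z *: w.

Lemma comb3D x y z x' y' z' :
  comb3 x y z + comb3 x' y' z' = comb3 (x + x') (y + y') (z + z').
Proof. by rewrite /comb3 addrACA [_ + (x' *: _ + _)]addrACA !scalerDl. Qed.

Lemma comb3Z k x y z : k *: comb3 x y z = comb3 (k * x) (k * y) (k * z).
Proof. by rewrite /comb3 !scalerDr !scalerA. Qed.

Lemma comb3B x y z x' y' z' :
  comb3 x y z - comb3 x' y' z' = comb3 (x - x') (y - y') (z - z').
Proof. by rewrite -scaleN1r comb3Z !mulN1r comb3D. Qed.

Lemma comb3_0 : comb3 0 0 0 = 0.
Proof. by rewrite /comb3 !scale0r !addr0. Qed.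

Lemma comb3_1 : comb3 1 1 1 = u + v + w.
Proof. by rewrite /comb3 !scale1r. Qed.

Lemma comb3_100 : comb3 1 0 0 = u.
Proof. by rewrite /comb3 scale1r !scale0r !addr0. Qed.

Lemma comb3_010 : comb3 0 1 0 = v.
Proof. by rewrite /comb3 scale1r !scale0r add0r addr0. Qed.

Lemma comb3_001 : comb3 0 0 1 = w.
Proof. by rewrite /comb3 scale1r !scale0r !add0r. Qed.

Lemma comb3_eq_scale k a b c x y z x' y' z' : comb3 a b c = 0 ->
  x - x' = k * a -> y - y' = k * b -> z - z' = k * c -> comb3 x y z = comb3 x' y' z'.
Proof.
move=> abc0 ex ey ez; apply/eqP; rewrite -subr_eq0 comb3B ex ey ez -comb3Z.
by rewrite abc0 scaler0.
Qed.

End Comb3.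
Arguments comb3_eq_scale {F V u v w} k {a b c x y z x' y' z'}.

Lemma comb3_shift (F : fieldType) (V : lmodType F) (u v w z : V) (q r : F) :
  comb3 u v w 0 q r = comb3 v w z q r 0.
Proof. by rewrite /comb3 !scale0r add0r addr0. Qed.

Lemma addr_idem_eq0 (Z : zmodType) (z : Z) : z = z + z -> z = 0.
Proof. by move/esym/eqP; rewrite -subr_eq0 addrK => /eqP. Qed.

Lemma mul_fixed_eq0 (F : fieldType) (l k : F) : l != 1 -> k = l * k -> k = 0.
Proof.
move=> l_neq1 /eqP; rewrite -subr_eq0 -{1}[k]mul1r -mulrBl mulf_eq0 subr_eq0 eq_sym.
by rewrite (negbTE l_neq1) => /eqP.
Qed.

Section VectorPolynomials.
Variable F : fieldType.

Definition vpoly (W : lmodType F) (f : F -> W) : Prop :=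
  exists s : seq (nat * W), forall t, f t = \sum_(p <- s) t ^+ p.1 *: p.2.

Variable W : lmodType F.
Implicit Types (f g : F -> W) (s : seq (nat * W)).

Lemma vpoly_cst (v : W) : vpoly (fun _ => v).
Proof. by exists [:: (0%N, v)] => t; rewrite big_seq1 expr0 scale1r. Qed.

Lemma vpolyD f g : vpoly f -> vpoly g -> vpoly (fun t => f t + g t).
Proof. by move=> [s1 Ef] [s2 Eg]; exists (s1 ++ s2) => t; rewrite big_cat Ef Eg. Qed.

Lemma vpolyZ k f : vpoly f -> vpoly (fun t => k *: f t).
Proof.
move=> [s Ef]; exists [seq (p.1, k *: p.2) | p <- s] => t.
rewrite big_map Ef scaler_sumr; apply: eq_bigr => p _ /=.
by rewrite !scalerA mulrC.
Qed.

Lemma vpolyN f : vpoly f -> vpoly (fun t => - f t).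
Proof. by move=> /(vpolyZ (-1)) [s Ef]; exists s => t; rewrite -Ef scaleN1r. Qed.

Lemma vpolyB f g : vpoly f -> vpoly g -> vpoly (fun t => f t - g t).
Proof. by move=> pf pg; apply: vpolyD => //; apply: vpolyN. Qed.

Lemma sum_linear_comb (U : lmodType F) (phi : U -> W) :
    (forall k u v, phi (k *: u + v) = k *: phi u + phi v) ->
  forall (I : Type) (r : seq I) (c : I -> F) (x : I -> U),
  phi (\sum_(i <- r) c i *: x i) = \sum_(i <- r) c i *: phi (x i).
Proof.
move=> phi_lin I r c x; have phi0 : phi 0 = 0.
  by have := phi_lin 1 0 0; rewrite !scale1r addr0 => /addr_idem_eq0.
by elim: r => [|i r IHr]; rewrite ?big_nil // !big_cons phi_lin IHr.
Qed.

Lemma vpoly_bilinear (U1 U2 : lmodType F) (be : U1 -> U2 -> W) (f1 : F -> U1) (f2 : F -> U2) :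
    (forall k u v w, be (k *: u + v) w = k *: be u w + be v w) ->
    (forall k u v w, be w (k *: u + v) = k *: be w u + be w v) ->
  vpoly f1 -> vpoly f2 -> vpoly (fun t => be (f1 t) (f2 t)).
Proof.
move=> be_linl be_linr [s1 Ef1] [s2 Ef2].
exists [seq ((p.1 + q.1)%N, be p.2 q.2) | p <- s1, q <- s2] => t.
rewrite big_allpairs_dep Ef1 (sum_linear_comb (phi := be^~ (f2 t))) //.
apply: eq_bigr => p _; rewrite Ef2 (sum_linear_comb (phi := be p.2)) // scaler_sumr.
by apply: eq_bigr => q _; rewrite scalerA exprD.
Qed.

Lemma sum_pow_regroup s n (t : F) : (forall p, p \in s -> p.1 < n)%N ->
  \sum_(p <- s) t ^+ p.1 *: p.2 = \sum_(i < n) t ^+ i *: \sum_(p <- s | p.1 == i) p.2.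
Proof.
elim: s => [|q s IHs] s_lt; first by rewrite big_nil big1 // => i _; rewrite big_nil scaler0.
rewrite big_cons IHs => [|p ps]; last by apply: s_lt; rewrite inE ps orbT.
have q_lt : (q.1 < n)%N by apply: s_lt; rewrite inE eqxx.
have split_q (i : 'I_n) : t ^+ i *: \sum_(p <- q :: s | p.1 == i) p.2 =
    (if q.1 == i then t ^+ i *: q.2 else 0) + t ^+ i *: \sum_(p <- s | p.1 == i) p.2.
  by rewrite big_cons; case: eqP => _; rewrite ?scalerDr ?add0r.
rewrite (eq_bigr _ (fun i _ => split_q i)) big_split /=; congr (_ + _).
by rewrite -big_mkcond /= (big_pred1 (Ordinal q_lt)).
Qed.

Hypothesis charF0 : [pchar F] =i pred0.

Lemma sum_pow_nat_eq0 n (w : nat -> W) :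
  (forall m : nat, \sum_(i < n) (m%:R : F) ^+ i *: w i = 0) ->
  forall i, (i < n)%N -> w i = 0.
Proof.
move=> Hw i lt_in; pose M := Vandermonde n (\row_(j < n) (j : nat)%:R : 'rV[F]_n).
have M_unit : M \in unitmx.
  rewrite unitmxE unitfE det_Vandermonde prodf_seq_neq0.
  apply/allP => k _; apply/implyP => _; rewrite prodf_seq_neq0.
  apply/allP => j _; apply/implyP => lt_kj; rewrite !mxE -natrB ?(ltnW lt_kj) //.
  by move/pcharf0P: charF0 => ->; rewrite subn_eq0 -ltnNge.
pose k := Ordinal lt_in.
have -> : w i = \sum_(l < n) (M *m invmx M) l k *: w l.
  rewrite mulmxV // (bigD1 k) //= mxE eqxx scale1r big1 ?addr0 // => l lk.
  by rewrite mxE (negbTE lk) scale0r.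
under eq_bigr => l _ do rewrite mxE scaler_suml.
rewrite exchange_big big1 // => j _.
under eq_bigr => l _ do rewrite mulrC -scalerA.
rewrite -scaler_sumr; suff -> : \sum_(l < n) M l j *: w l = 0 by rewrite scaler0.
by rewrite -[RHS](Hw j); apply: eq_bigr => l _; rewrite !mxE.
Qed.

Lemma vpoly_eq0 f : vpoly f -> (forall n : nat, f n%:R = 0) -> forall t, f t = 0.
Proof.
move=> [s Ef] f_nat t; pose n := (\max_(p <- s) p.1).+1.
have s_lt p : p \in s -> (p.1 < n)%N by move=> ps; rewrite ltnS leq_bigmax_seq.
rewrite Ef (sum_pow_regroup _ s_lt) big1 // => i _.
rewrite (@sum_pow_nat_eq0 n (fun i => \sum_(p <- s | p.1 == i) p.2)) ?scaler0 // => m.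
by rewrite -(sum_pow_regroup _ s_lt) -Ef f_nat.
Qed.

Lemma vpoly_eq f g : vpoly f -> vpoly g -> (forall n : nat, f n%:R = g n%:R) -> f =1 g.
Proof.
move=> pf pg fg t; apply/eqP; rewrite -subr_eq0; apply/eqP.
by apply: (vpoly_eq0 (vpolyB pf pg)) => n; rewrite fg subrr.
Qed.

End VectorPolynomials.

Section CommutativeAlgebra.
Variables (F : fieldType) (V : lmodType F) (mul : V -> V -> V).
Hypothesis mulP : comm_bilinear_mul mul.

Lemma amulC u v : mul u v = mul v u.
Proof. by case: mulP. Qed.

Lemma amul_linl k u v w : mul (k *: u + v) w = k *: mul u w + mul v w.
Proof. by case: mulP. Qed.

Lemma amul_linr k u v w : mul w (k *: u + v) = k *: mul w u + mul w v.
Proof. by case: mulP. Qed.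

Lemma amul0l w : mul 0 w = 0.
Proof. by have := amul_linl 1 0 0 w; rewrite !scale1r addr0 => /addr_idem_eq0. Qed.

Lemma amulDl u v w : mul (u + v) w = mul u w + mul v w.
Proof. by have := amul_linl 1 u v w; rewrite !scale1r. Qed.

Lemma amulZl k u w : mul (k *: u) w = k *: mul u w.
Proof. by rewrite -[k *: u]addr0 amul_linl amul0l addr0. Qed.

Lemma amulNl u w : mul (- u) w = - mul u w.
Proof. by rewrite -scaleN1r amulZl scaleN1r. Qed.

Lemma amul0r w : mul w 0 = 0.
Proof. by rewrite amulC amul0l. Qed.

Lemma amulDr u v w : mul w (u + v) = mul w u + mul w v.
Proof. by rewrite !(amulC w) amulDl. Qed.

Lemma amulZr k u w : mul w (k *: u) = k *: mul w u.
Proof. by rewrite !(amulC w) amulZl. Qed.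

Lemma amulNr u w : mul w (- u) = - mul w u.
Proof. by rewrite !(amulC w) amulNl. Qed.

Lemma amul_comb3 x u v w p q r :
  mul x (comb3 u v w p q r) = comb3 (mul x u) (mul x v) (mul x w) p q r.
Proof. by rewrite /comb3 !amulDr !amulZr. Qed.

Lemma eigsp0 x l : eigsp mul x l 0.
Proof. by rewrite /eigsp amul0r scaler0. Qed.

Lemma eigspD x l u v : eigsp mul x l u -> eigsp mul x l v -> eigsp mul x l (u + v).
Proof. by rewrite /eigsp amulDr scalerDr => -> ->. Qed.

Lemma eigspZ x l k u : eigsp mul x l u -> eigsp mul x l (k *: u).
Proof. by rewrite /eigsp amulZr => ->; rewrite !scalerA mulrC. Qed.

Lemma vpoly_amul (f g : F -> V) : vpoly f -> vpoly g -> vpoly (fun t => mul (f t) (g t)).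
Proof. exact: vpoly_bilinear amul_linl amul_linr. Qed.

Lemma axis_automorphism (sg : V -> V) y :
    (forall k u v, sg (k *: u + v) = k *: sg u + sg v) ->
    (forall u v, sg (mul u v) = mul (sg u) (sg v)) -> bijective sg ->
  primitive_axis_half mul y -> primitive_axis_half mul (sg y).
Proof.
move=> sg_lin sgM [g sgK gK] [y_neq0 yy decomp A1 [f11 f10 f00 [f1h f0h] fhh]].
have sg0 : sg 0 = 0.
  by have := sg_lin 1 0 0; rewrite !scale1r addr0 => /addr_idem_eq0.
have sgD u v : sg (u + v) = sg u + sg v by have := sg_lin 1 u v; rewrite !scale1r.
have sgZ k u : sg (k *: u) = k *: sg u by have := sg_lin k u 0; rewrite !addr0 sg0 addr0.
have eigP l u : eigsp mul (sg y) l (sg u) <-> eigsp mul y l u.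
  by rewrite /eigsp -sgM -sgZ; split=> [/(can_inj sgK) | ->].
split=> [||w|w|].
- by apply: contraNneq y_neq0 => sgy0; apply/eqP; rewrite -[y]sgK sgy0 -{1}sg0 sgK.
- by rewrite -sgM yy.
- have [u1 [u0 [uh [Ew u1P u0P uhP]]]] := decomp (g w).
  by exists (sg u1), (sg u0), (sg uh); split; [rewrite -!sgD -Ew gK | exact/eigP..].
- by rewrite -[w]gK => /eigP /A1 [k ->]; exists k; rewrite sgZ.
have fusion l m n : (forall u v, eigsp mul y l u -> eigsp mul y m v -> eigsp mul y n (mul u v)) ->
    forall u v, eigsp mul (sg y) l u -> eigsp mul (sg y) m v -> eigsp mul (sg y) n (mul u v).
  by move=> f u v; rewrite -[u]gK -[v]gK -sgM => /eigP uP /eigP vP; apply/eigP; apply: f.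
split; [exact: fusion f11 | | exact: fusion f00 | split; [exact: fusion f1h | exact: fusion f0h] |];
  move=> u v; rewrite -[u]gK -[v]gK -sgM => /eigP uP /eigP vP; first by rewrite f10 ?sg0.
have [w1 [w0 [-> w1P w0P]]] := fhh _ _ uP vP.
by exists (sg w1), (sg w0); split; [rewrite sgD | exact/eigP..].
Qed.

Lemma amul_comb3_eigsp x u1 u0 uh :
    eigsp mul x 1 u1 -> eigsp mul x 0 u0 -> eigsp mul x 2^-1 uh ->
  forall p q r, mul x (comb3 u1 u0 uh p q r) = comb3 u1 u0 uh p 0 (r * 2^-1).
Proof.
rewrite /eigsp => e1 e0 eh p q r.
by rewrite amul_comb3 e1 e0 eh /comb3 !scale1r !scale0r scaler0 scalerA.
Qed.

(* Lagrange interpolation of the eigenvalues 1, 0, 1/2: the projections of an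
   eigenvector decomposition, as polynomials in multiplication by x. *)
Definition eproj1 x u := 2 *: mul x (mul x u) - mul x u.
Definition eproj0 x u := 2 *: mul x (mul x u) - 3 *: mul x u + u.
Definition eprojh x u := 4 *: (mul x u - mul x (mul x u)).

Lemma eprojE x u : let u1 := mul x u in let u2 := mul x u1 in
  [/\ eproj1 x u = comb3 u u1 u2 0 (-1) 2, eproj0 x u = comb3 u u1 u2 1 (-3) 2
    & eprojh x u = comb3 u u1 u2 0 4 (-4)].
Proof.
move=> u1 u2; rewrite /eproj1 /eproj0 /eprojh /comb3 -/u1 -/u2 !scale0r !add0r scale1r.
rewrite scaleN1r !scaleNr scalerBr; split=> //; first by rewrite addrC.
by rewrite addrAC [RHS]addrAC [u + _]addrC.
Qed.

Lemma eproj_sum x u : eproj1 x u + eproj0 x u + eprojh x u = u.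
Proof.
have [-> -> ->] := eprojE x u; rewrite !comb3D -[RHS](comb3_100 u (mul x u) (mul x (mul x u))).
by congr comb3; ring.
Qed.

Lemma eproj0_eproj1 x u : eproj0 x u = eproj1 x u + u - 2 *: mul x u.
Proof.
have [-> -> _] := eprojE x u; set u1 := mul x u; set u2 := mul x u1.
rewrite -{3}[u1](comb3_010 u u1 u2) -{3}[u](comb3_100 u u1 u2).
by rewrite comb3Z comb3D comb3B; congr comb3; ring.
Qed.

Lemma half_neq1 : (2^-1 : F) != 1.
Proof. by rewrite invr_eq1 -subr_eq0 -[2]/(1 + 1)%:R natrD addrK oner_neq0. Qed.

Hypothesis charF0 : [pchar F] =i pred0.

Lemma two_neq0 : (2 : F) != 0.
Proof. by move/pcharf0P: charF0 => ->. Qed.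

Section Eigenvectors.
Variables (x u1 u0 uh : V).
Hypotheses (u1P : eigsp mul x 1 u1) (u0P : eigsp mul x 0 u0) (uhP : eigsp mul x 2^-1 uh).
Local Notation comb := (comb3 u1 u0 uh).

Lemma eproj_comb3 p q r :
  [/\ eproj1 x (comb p q r) = comb p 0 0, eproj0 x (comb p q r) = comb 0 q 0
    & eprojh x (comb p q r) = comb 0 0 r].
Proof.
have two0 := two_neq0.
rewrite /eproj1 /eproj0 /eprojh !(amul_comb3_eigsp u1P u0P uhP) !(comb3Z, comb3B, comb3D).
by split; congr comb3; field.
Qed.

Lemma eproj_decomp :
  [/\ eproj1 x (u1 + u0 + uh) = u1, eproj0 x (u1 + u0 + uh) = u0
    & eprojh x (u1 + u0 + uh) = uh].
Proof.
by rewrite -comb3_1; have [-> -> ->] := eproj_comb3 1 1 1; rewrite comb3_100 comb3_010 comb3_001.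
Qed.

End Eigenvectors.

Lemma eigsp_decomp_uniq x u1 u0 uh v1 v0 vh :
    eigsp mul x 1 u1 -> eigsp mul x 0 u0 -> eigsp mul x 2^-1 uh ->
    eigsp mul x 1 v1 -> eigsp mul x 0 v0 -> eigsp mul x 2^-1 vh ->
  u1 + u0 + uh = v1 + v0 + vh -> [/\ u1 = v1, u0 = v0 & uh = vh].
Proof.
move=> u1P u0P uhP v1P v0P vhP E.
have [Eu1 Eu0 Euh] := eproj_decomp u1P u0P uhP.
have [Ev1 Ev0 Evh] := eproj_decomp v1P v0P vhP.
by split; [rewrite -Eu1 E Ev1 | rewrite -Eu0 E Ev0 | rewrite -Euh E Evh].
Qed.

Lemma eproj1_id x u : eigsp mul x 1 u -> eproj1 x u = u.
Proof.
by move=> uP; have [+ _ _] := eproj_decomp uP (eigsp0 x 0) (eigsp0 x 2^-1); rewrite !addr0.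
Qed.

Lemma eproj0_id x u : eigsp mul x 0 u -> eproj0 x u = u.
Proof.
by move=> uP; have [_ + _] := eproj_decomp (eigsp0 x 1) uP (eigsp0 x 2^-1); rewrite add0r addr0.
Qed.

Lemma eprojh_id x u : eigsp mul x 2^-1 u -> eprojh x u = u.
Proof.
by move=> uP; have [_ _ +] := eproj_decomp (eigsp0 x 1) (eigsp0 x 0) uP; rewrite !add0r.
Qed.

(* All three eigenvector conditions on the projections reduce to the single
   relation 2 x(x(xu)) - 3 x(xu) + xu = 0. *)
Lemma eproj_eigsp x u : eigsp mul x 0 (eproj0 x u) ->
  eigsp mul x 1 (eproj1 x u) /\ eigsp mul x 2^-1 (eprojh x u).
Proof.
have [-> -> ->] := eprojE x u; rewrite /eigsp !amul_comb3 scale0r => rel.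
have two0 := two_neq0; split; rewrite [in RHS](comb3_shift _ _ _ (mul x (mul x (mul x u)))) comb3Z.
  by apply: (comb3_eq_scale 1 rel); ring.
by apply: (comb3_eq_scale (-2) rel); field.
Qed.

Lemma idempotent_decomp x s h : primitive_axis_half mul x ->
    eigsp mul x 0 s -> eigsp mul x 2^-1 h -> mul (x + s + h) (x + s + h) = x + s + h ->
  mul s h = 0 /\ mul h h = s - mul s s.
Proof.
case=> _ xx _ _ [_ _ f00 [_ f0h] fhh] sP hP yy.
have x1 : eigsp mul x 1 x by rewrite /eigsp xx scale1r.
have [w1 [w0 [hh w1P w0P]]] := fhh _ _ hP hP; have shP := f0h _ _ sP hP.
have xy : mul x (x + s + h) = x + 2^-1 *: h by rewrite !amulDr xx sP hP scale0r addr0.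
have sy : mul s (x + s + h) = mul s s + mul s h by rewrite !amulDr (amulC s x) sP scale0r add0r.
have hy : mul h (x + s + h) = 2^-1 *: h + mul s h + (w1 + w0).
  by rewrite !amulDr (amulC h x) hP (amulC h s) hh.
have E : (x + w1) + (mul s s + w0) + ((2^-1 *: h + mul s h) + (2^-1 *: h + mul s h)) = x + s + h.
  rewrite -[RHS]yy !amulDl xy sy hy (addrACA x (2^-1 *: h)) (addrC (_ + _) (w1 + w0)).
  by rewrite (addrACA (x + mul s s)) (addrACA x (mul s s)).
have [Ex E0 Eh] := eigsp_decomp_uniq (eigspD x1 w1P) (eigspD (f00 _ _ sP sP) w0P)
  (eigspD (eigspD (eigspZ _ hP) shP) (eigspD (eigspZ _ hP) shP)) x1 sP hP E.
split.
  have half2 : (2^-1 + 2^-1 : F) = 1 by have two0 := two_neq0; field.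
  have : h + (mul s h + mul s h) = h + 0.
    by rewrite addr0 -[RHS]Eh addrACA -scalerDl half2 scale1r.
  by move/addrI/eqP; rewrite -mulr2n -scaler_nat scaler_eq0 (negbTE two_neq0) => /eqP.
have w1_0 : w1 = 0 by apply: (addrI x); rewrite Ex addr0.
by rewrite hh w1_0 add0r; apply: (addrI (mul s s)); rewrite E0 addrC subrK.
Qed.

Definition miyamoto x u := u - 2 *: eprojh x u.

Lemma miyamoto_lin x k u v : miyamoto x (k *: u + v) = k *: miyamoto x u + miyamoto x v.
Proof.
have eprojh_lin : eprojh x (k *: u + v) = k *: eprojh x u + eprojh x v.
  rewrite /eprojh !(amulDr, amulZr) opprD addrACA -scalerBr scalerDr.
  by rewrite [k *: (4 *: _)]scalerA scalerA mulrC.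
rewrite /miyamoto eprojh_lin scalerDr opprD addrACA scalerBr; congr (_ + _).
by rewrite [2 *: (k *: _)]scalerA [k *: (2 *: _)]scalerA mulrC.
Qed.

Lemma miyamotoD x u v : miyamoto x (u + v) = miyamoto x u + miyamoto x v.
Proof. by have := miyamoto_lin x 1 u v; rewrite !scale1r. Qed.

Lemma miyamoto_comb3 x u1 u0 uh :
    eigsp mul x 1 u1 -> eigsp mul x 0 u0 -> eigsp mul x 2^-1 uh ->
  forall p q r, miyamoto x (comb3 u1 u0 uh p q r) = comb3 u1 u0 uh p q (- r).
Proof.
move=> u1P u0P uhP p q r; have [_ _ Eh] := eproj_comb3 u1P u0P uhP p q r.
by rewrite /miyamoto Eh comb3Z comb3B; congr comb3; ring.
Qed.

Lemma miyamoto_even x u : eigsp mul x 1 u \/ eigsp mul x 0 u -> miyamoto x u = u.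
Proof.
case=> uP; [have := miyamoto_comb3 uP (eigsp0 x 0) (eigsp0 x 2^-1) 1 0 0
  | have := miyamoto_comb3 (eigsp0 x 1) uP (eigsp0 x 2^-1) 0 1 0];
  by rewrite oppr0 ?comb3_100 ?comb3_010.
Qed.

Lemma miyamoto_odd x u : eigsp mul x 2^-1 u -> miyamoto x u = - u.
Proof.
move=> uP; have := miyamoto_comb3 (eigsp0 x 1) (eigsp0 x 0) uP 0 0 1.
by rewrite comb3_001 /comb3 !scale0r !add0r scaleN1r.
Qed.

Lemma miyamotoK x : primitive_axis_half mul x -> involutive (miyamoto x).
Proof.
case=> _ _ decomp _ _ u; have [u1 [u0 [uh [-> u1P u0P uhP]]]] := decomp u.
by rewrite -comb3_1 !(miyamoto_comb3 u1P u0P uhP) opprK.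
Qed.

(* The fusion rules are Z/2-graded, with A_1 + A_0 even and A_1/2 odd, and
   miyamoto x is the sign of this grading. *)
Lemma miyamotoM x u v : primitive_axis_half mul x ->
  miyamoto x (mul u v) = mul (miyamoto x u) (miyamoto x v).
Proof.
case=> _ _ decomp _ [f11 f10 f00 [f1h f0h] fhh].
pose good u v := miyamoto x (mul u v) = mul (miyamoto x u) (miyamoto x v).
have goodC p q : good p q -> good q p by rewrite /good amulC => ->; rewrite amulC.
have goodDl p p' q : good p q -> good p' q -> good (p + p') q.
  by move=> pq p'q; rewrite /good amulDl !miyamotoD amulDl pq p'q.
have goodDr p q q' : good p q -> good p q' -> good p (q + q').
  by move=> /goodC pq /goodC pq'; apply: goodC; apply: (goodDl).
have e1 p : eigsp mul x 1 p -> miyamoto x p = p by move=> pP; apply: miyamoto_even; left.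
have e0 p : eigsp mul x 0 p -> miyamoto x p = p by move=> pP; apply: miyamoto_even; right.
have eh p : eigsp mul x 2^-1 p -> miyamoto x p = - p := @miyamoto_odd x p.
have g11 p q : eigsp mul x 1 p -> eigsp mul x 1 q -> good p q.
  by move=> pP qP; rewrite /good (e1 _ pP) (e1 _ qP) (e1 _ (f11 _ _ pP qP)).
have g10 p q : eigsp mul x 1 p -> eigsp mul x 0 q -> good p q.
  by move=> pP qP; rewrite /good (e1 _ pP) (e0 _ qP) (f10 _ _ pP qP) (e0 _ (eigsp0 x 0)).
have g00 p q : eigsp mul x 0 p -> eigsp mul x 0 q -> good p q.
  by move=> pP qP; rewrite /good (e0 _ pP) (e0 _ qP) (e0 _ (f00 _ _ pP qP)).
have g1h p q : eigsp mul x 1 p -> eigsp mul x 2^-1 q -> good p q.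
  by move=> pP qP; rewrite /good (e1 _ pP) (eh _ qP) (eh _ (f1h _ _ pP qP)) amulNr.
have g0h p q : eigsp mul x 0 p -> eigsp mul x 2^-1 q -> good p q.
  by move=> pP qP; rewrite /good (e0 _ pP) (eh _ qP) (eh _ (f0h _ _ pP qP)) amulNr.
have ghh p q : eigsp mul x 2^-1 p -> eigsp mul x 2^-1 q -> good p q.
  move=> pP qP; rewrite /good (eh _ pP) (eh _ qP) amulNl amulNr opprK.
  by have [w1 [w0 [-> w1P w0P]]] := fhh _ _ pP qP; rewrite miyamotoD (e1 _ w1P) (e0 _ w0P).
have [u1 [u0 [uh [-> u1P u0P uhP]]]] := decomp u.
have [v1 [v0 [vh [-> v1P v0P vhP]]]] := decomp v.
apply: (goodDl); first apply: (goodDl).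
all: apply: (goodDr); first apply: (goodDr).
all: by auto.
Qed.

Section PairSubalgebra.
Variables a s h : V.
Hypotheses (aa : mul a a = a) (sP : eigsp mul a 0 s) (hP : eigsp mul a 2^-1 h).
Hypotheses (ss0 : mul s s = 0) (sh0 : mul s h = 0) (hh : mul h h = s).
Local Notation comb := (comb3 a s h).

Lemma comb3_mul x y z x' y' z' :
  mul (comb x y z) (comb x' y' z') = comb (x * x') (z * z') ((x * z' + z * x') * 2^-1).
Proof.
have a1 : eigsp mul a 1 a by rewrite /eigsp aa scale1r.
have ms : mul s (comb x' y' z') = 0.
  by rewrite amul_comb3 (amulC s a) sP scale0r ss0 sh0 /comb3 !scaler0 !addr0.
have mh : mul h (comb x' y' z') = comb 0 z' (x' * 2^-1).
  rewrite amul_comb3 (amulC h a) hP (amulC h s) sh0 hh /comb3.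
  by rewrite scaler0 addr0 scale0r add0r scalerA addrC.
rewrite {1}/comb3 !amulDl !amulZl (amul_comb3_eigsp a1 sP hP) ms mh scaler0 addr0.
by rewrite !comb3Z comb3D; congr comb3; ring.
Qed.

Lemma gen2_comb3 b c : b = a + s + h -> gen2 mul a b c -> exists x y z, c = comb x y z.
Proof.
move=> Eb; elim=> [_ [->|->] | | u v _ [x [y [z ->]]] _ [x' [y' [z' ->]]] | k u _ [x [y [z ->]]]
  | u v _ [x [y [z ->]]] _ [x' [y' [z' ->]]]].
- by exists 1, 0, 0; rewrite comb3_100.
- by exists 1, 1, 1; rewrite comb3_1.
- by exists 0, 0, 0; rewrite comb3_0.
- by exists (x + x'), (y + y'), (z + z'); rewrite comb3D.
- by exists (k * x), (k * y), (k * z); rewrite comb3Z.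
- by rewrite comb3_mul; eexists _, _, _.
Qed.

Definition idem_curve t := comb 1 (t * t) t.

Lemma gen2_idempotent b c : a != 0 -> b = a + s + h ->
  gen2 mul a b c -> mul c c = c -> c != 0 -> exists t, c = idem_curve t.
Proof.
move=> a_neq0 Eb /(gen2_comb3 Eb) [x [y [z ->]]] cc c_neq0; exists z.
have a1 : eigsp mul a 1 a by rewrite /eigsp aa scale1r.
have [Ea Es Eh] := eigsp_decomp_uniq (eigspZ (x * x) a1) (eigspZ (z * z) sP)
  (eigspZ ((x * z + z * x) * 2^-1) hP) (eigspZ x a1) (eigspZ y sP) (eigspZ z hP)
  (etrans (esym (comb3_mul _ _ _ _ _ _)) cc).
have /eqP : (x * x - x) *: a = 0 by rewrite scalerBl Ea subrr.
rewrite scaler_eq0 (negbTE a_neq0) orbF -{3}[x]mulr1 -mulrBr mulf_eq0 subr_eq0.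
case/orP=> /eqP x_val; last by rewrite /idem_curve /comb3 x_val Es.
case/negP: c_neq0; rewrite -cc -cc x_val !comb3_mul -(comb3_0 a s h).
by apply/eqP; congr comb3; ring.
Qed.

Lemma miyamoto_idem_curve t t' :
  miyamoto (idem_curve t) (idem_curve t') = idem_curve (2 * t - t').
Proof.
have two0 := two_neq0.
rewrite /miyamoto /eprojh /idem_curve !comb3_mul !(comb3Z, comb3B, comb3D).
by congr comb3; field.
Qed.

Lemma vpoly_idem_curve : vpoly idem_curve.
Proof.
exists [:: (0%N, a); (2%N, s); (1%N, h)] => t.
by rewrite !big_cons big_nil addr0 /= expr0 expr1 expr2 /idem_curve /comb3 addrA.
Qed.

Lemma idem_curve_nat_axis : primitive_axis_half mul a ->
  primitive_axis_half mul (a + s + h) -> forall n : nat, primitive_axis_half mul (idem_curve n%:R).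
Proof.
move=> axa axb; suff ax2 n : primitive_axis_half mul (idem_curve n%:R) /\
    primitive_axis_half mul (idem_curve n.+1%:R) by move=> n; case: (ax2 n).
elim: n => [|n [axn axn1]].
  by rewrite /idem_curve mulr0 comb3_100 mulr1 comb3_1.
split=> //; have := axis_automorphism (miyamoto_lin (idem_curve n.+1%:R))
  (fun u v => miyamotoM u v axn1) (inv_bij (miyamotoK axn1)) axn.
rewrite miyamoto_idem_curve.
by have -> : (2 * n.+1%:R - n%:R : F) = n.+2%:R by rewrite -[n.+2]addn1 -[n.+1]addn1 !natrD; ring.
Qed.

End PairSubalgebra.

Section FrobeniusForm.
Variable form : V -> V -> F.
Hypothesis formP : frobenius_form mul form.

Lemma form_linl k u v w : form (k *: u + v) w = k * form u w + form v w.
Proof. by case: formP. Qed.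

Lemma form_linr k u v w : form w (k *: u + v) = k * form w u + form w v.
Proof. by case: formP. Qed.

Lemma form_assoc u v w : form (mul u v) w = form u (mul v w).
Proof. by case: formP. Qed.

Lemma form0l w : form 0 w = 0.
Proof. by have := form_linl 1 0 0 w; rewrite scale1r addr0 mul1r => /addr_idem_eq0. Qed.

Lemma form0r w : form w 0 = 0.
Proof. by have := form_linr 1 0 0 w; rewrite scale1r addr0 mul1r => /addr_idem_eq0. Qed.

Lemma formDl u v w : form (u + v) w = form u w + form v w.
Proof. by have := form_linl 1 u v w; rewrite scale1r mul1r. Qed.

Lemma formDr u v w : form w (u + v) = form w u + form w v.
Proof. by have := form_linr 1 u v w; rewrite scale1r mul1r. Qed.

Lemma formZl k u w : form (k *: u) w = k * form u w.
Proof. by have := form_linl k u 0 w; rewrite addr0 form0l addr0. Qed.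

Lemma formZr k u w : form w (k *: u) = k * form w u.
Proof. by have := form_linr k u 0 w; rewrite addr0 form0r addr0. Qed.

Lemma form_eigsp_r x l w : mul x x = x -> l != 1 -> eigsp mul x l w -> form x w = 0.
Proof.
move=> xx l_neq1 wP; apply: (mul_fixed_eq0 l_neq1).
by rewrite -formZr -wP -form_assoc xx.
Qed.

Lemma form_eigsp_l x l w : mul x x = x -> l != 1 -> eigsp mul x l w -> form w x = 0.
Proof.
move=> xx l_neq1 wP; apply: (mul_fixed_eq0 l_neq1).
by rewrite -formZl -wP amulC form_assoc xx.
Qed.

Lemma form_axis_sym x u : primitive_axis_half mul x -> form u x = form x u.
Proof.
case=> _ xx decomp A1 _; have [u1 [u0 [uh [-> u1P u0P uhP]]]] := decomp u.
have [k ->] := A1 _ u1P; have neq01 : (0 : F) != 1 by rewrite eq_sym oner_neq0.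
rewrite !formDl !formDr formZl formZr (form_eigsp_l xx neq01 u0P) (form_eigsp_r xx neq01 u0P).
by rewrite (form_eigsp_l xx half_neq1 uhP) (form_eigsp_r xx half_neq1 uhP).
Qed.

(* The fusion rules involving A_1(x) are omitted: they follow from A_1(x) = F x. *)
Definition axis_identities x : Prop :=
  [/\ forall u, eigsp mul x 0 (eproj0 x u),
      forall u, eproj1 x u = form x u *: x,
      forall u v, eigsp mul x 0 (mul (eproj0 x u) (eproj0 x v)),
      forall u v, eigsp mul x 2^-1 (mul (eproj0 x u) (eprojh x v))
    & forall u v, eprojh x (mul (eprojh x u) (eprojh x v)) = 0].

Lemma axis_eproj x u : primitive_axis_half mul x ->
  [/\ eproj1 x u = form x u *: x, eigsp mul x 0 (eproj0 x u) & eigsp mul x 2^-1 (eprojh x u)].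
Proof.
move=> ax; have [_ xx decomp A1 _] := ax; have [u1 [u0 [uh [-> u1P u0P uhP]]]] := decomp u.
have [-> -> ->] := eproj_decomp u1P u0P uhP; split=> //; have [k ->] := A1 _ u1P.
have neq01 : (0 : F) != 1 by rewrite eq_sym oner_neq0.
rewrite !formDr formZr (form_eigsp_r xx neq01 u0P) (form_eigsp_r xx half_neq1 uhP).
by have [_ _ _ ->] := formP; rewrite ?mulr1 ?addr0.
Qed.

Lemma axis_identitiesP x : x != 0 -> mul x x = x ->
  primitive_axis_half mul x <-> axis_identities x.
Proof.
move=> x_neq0 xx; split=> [ax | [eproj0P eproj1E fus00 fus0h fushh]].
  have [_ _ _ _ [_ _ f00 [_ f0h] fhh]] := ax.
  split=> [u | u | u v | u v | u v]; have [Eu1 u0P uhP] := axis_eproj u ax => //.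
  - by have [_ v0P _] := axis_eproj v ax; apply: f00.
  - by have [_ _ vhP] := axis_eproj v ax; apply: f0h.
  have [_ _ vhP] := axis_eproj v ax; have [w1 [w0 [-> w1P w0P]]] := fhh _ _ uhP vhP.
  by have [_ _ <-] := eproj_decomp w1P w0P (eigsp0 x 2^-1); rewrite addr0.
have A1 u : eigsp mul x 1 u -> exists k, u = k *: x.
  by move=> u1P; exists (form x u); rewrite -eproj1E eproj1_id.
have x1 : eigsp mul x 1 x by rewrite /eigsp xx scale1r.
split=> // [u | ]; first by exists (eproj1 x u), (eproj0 x u), (eprojh x u);
  have [] := eproj_eigsp (eproj0P u); rewrite eproj_sum.
split=> [u v /A1[k ->] /A1[l ->] | u v /A1[k ->] v0P | u v u0P v0P | | u v uhP vhP].
- by rewrite amulZl amulZr xx; do 2 apply: eigspZ.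
- by rewrite amulZl v0P scale0r scaler0.
- by rewrite -(eproj0_id u0P) -(eproj0_id v0P).
- split=> [u v /A1[k ->] vhP | u v u0P vhP]; last by rewrite -(eproj0_id u0P) -(eprojh_id vhP).
  by rewrite amulZl vhP; do 2 apply: eigspZ.
exists (eproj1 x (mul u v)), (eproj0 x (mul u v)).
have [w1P whP] := eproj_eigsp (eproj0P (mul u v)); split=> //.
rewrite -[LHS](eproj_sum x) -[u in X in _ + X](eprojh_id uhP).
by rewrite -[v in X in _ + X](eprojh_id vhP) fushh addr0.
Qed.

Lemma vpoly_formZ u (f g : F -> V) : vpoly f -> vpoly g -> vpoly (fun t => form (f t) u *: g t).
Proof.
apply: (@vpoly_bilinear _ _ _ _ (fun y w => form y u *: w)) => k v w z.
  by rewrite form_linl scalerDl scalerA.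
by rewrite scalerDr !scalerA mulrC.
Qed.

Ltac vpoly_closure := rewrite /eigsp /eproj1 /eproj0 /eprojh;
  repeat first [ assumption | apply: vpoly_cst | apply: vpolyD | apply: vpolyN
               | apply: vpolyZ | apply: vpoly_amul | apply: vpoly_formZ ].

Lemma axis_identities_vpoly (X : F -> V) : vpoly X ->
  (forall n : nat, axis_identities (X n%:R)) -> forall t, axis_identities (X t).
Proof.
move=> XP Xn t; split=> [u|u|u v|u v|u v]; move: t; rewrite /eigsp;
  (apply: (vpoly_eq charF0) => [||n]; [vpoly_closure | vpoly_closure | have [] := Xn n]).
- by move=> + _ _ _ _; apply.
- by move=> _ + _ _ _; apply.
- by move=> _ _ + _ _; apply.
- by move=> _ _ _ + _; apply.
- by move=> _ _ _ _ +; apply.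
Qed.

Section AxisPair.
Variables a b : V.
Hypotheses (axa : primitive_axis_half mul a) (axb : primitive_axis_half mul b) (fab : form a b = 1).
Local Notation s := (eproj0 a b).
Local Notation h := (eprojh a b).

Lemma axis_pair_eproj1 : eproj1 a b = a /\ eproj1 b a = b.
Proof.
have [E1ab _ _] := axis_eproj b axa; have [E1ba _ _] := axis_eproj a axb.
by rewrite E1ab E1ba (form_axis_sym b axa) fab !scale1r.
Qed.

Lemma axis_pair_structure :
  [/\ b = a + s + h, eigsp mul a 0 s, eigsp mul a 2^-1 h
    & [/\ mul s s = 0, mul s h = 0 & mul h h = s]].
Proof.
have [E1ab E1ba] := axis_pair_eproj1.
have Eb : b = a + s + h by rewrite -{1}E1ab eproj_sum.
have [_ sP hP] := axis_eproj b axa.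
have [sh0 hh] : mul s h = 0 /\ mul h h = s - mul s s.
  by apply: (idempotent_decomp axa sP hP); rewrite -Eb; case: axb.
have s_sym : s = eproj0 b a.
  by rewrite eproj0_eproj1 (eproj0_eproj1 b a) E1ab E1ba (amulC b a) [b + a]addrC.
have sPb : eigsp mul b 0 s by rewrite s_sym; have [] := axis_eproj a axb.
have ss0 : mul s s = 0.
  move: sPb; rewrite /eigsp scale0r {1}Eb amulDl amulDl sP scale0r add0r.
  by rewrite (amulC h) sh0 addr0.
by rewrite ss0 subr0 in hh.
Qed.

End AxisPair.

End FrobeniusForm.

End CommutativeAlgebra.

Theorem proposition6p5 (F : fieldType) (V : lmodType F) (mul : V -> V -> V)
    (form : V -> V -> F) (a b : V) :
  [pchar F] =i pred0 ->
  jordan_type_half_algebra mul ->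
  frobenius_form mul form ->
  primitive_axis_half mul a -> primitive_axis_half mul b ->
  form a b = 1 ->
  forall c, gen2 mul a b c -> mul c c = c -> c != 0 -> primitive_axis_half mul c.
Proof.
move=> charF0 [mulP _] formP axa axb fab c gen_c cc c_neq0.
have [Eb sP hP [ss0 sh0 hh]] := axis_pair_structure mulP charF0 formP axa axb fab.
have [a_neq0 aa _ _ _] := axa.
have [t Ec] := gen2_idempotent mulP charF0 aa sP hP ss0 sh0 hh a_neq0 Eb gen_c cc c_neq0.
rewrite Ec in cc c_neq0 *; apply/(axis_identitiesP mulP charF0 formP c_neq0 cc).
apply: (axis_identities_vpoly mulP charF0 formP (vpoly_idem_curve _ _ _)) => n.
have := idem_curve_nat_axis mulP charF0 aa sP hP ss0 sh0 hh axa; rewrite -Eb => /(_ axb n) axn.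
by have [xn0 xx _ _ _] := axn; apply/(axis_identitiesP mulP charF0 formP xn0 xx).
Qed.
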